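(* For every $g\in\mathrm{Sp}(2,1)$, the set of traces of the elements of $g\,(1\oplus\mathrm{Sp}(1,1))\,g^{-1}$ is not contained in $\mathbb R$.
   Context: $\mathbb H$ denotes the quaternions. $\mathrm{Sp}(n,1)=\{A\in\mathrm{GL}(n+1,\mathbb H): A^*I_{n,1}A=I_{n,1}\}$ with $A^*$ the conjugate transpose and $I_{n,1}=\mathrm{diag}(1,\dots,1,-1)$. $1\oplus\mathrm{Sp}(1,1)$ is the subgroup of $\mathrm{Sp}(2,1)$ of block diagonal matrices with $1$ in the upper left entry and an element of $\mathrm{Sp}(1,1)$ in the lower right $2\times 2$ block. The trace of a quaternionic matrix is the sum of its diagonal entries. *)

(* Real quaternions H over an arbitrary realType R, and
   quaternionic matrices as MathComp matrices 'M[quat R]_(m,n) with the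
   (non-commutative) quaternionic operations written out explicitly. *)
From mathcomp Require Import all_boot all_order all_algebra.
From mathcomp Require Import reals.
Set Implicit Arguments. Unset Strict Implicit. Unset Printing Implicit Defensive.
Import Order.TTheory GRing.Theory Num.Theory.
Local Open Scope ring_scope.

Section Quat.
Variable R : realType.

(* a + b i + c j + d k *)
Record quat := Quat { qre : R; qi : R; qj : R; qk : R }.

Definition q0 : quat := Quat 0 0 0 0.
Definition q1 : quat := Quat 1 0 0 0.
Definition qreal (a : R) : quat := Quat a 0 0 0.
Definition qadd (p q : quat) : quat :=
  Quat (qre p + qre q) (qi p + qi q) (qj p + qj q) (qk p + qk q).
(* Hamilton product: i^2 = j^2 = k^2 = ijk = -1 *)
Definition qmul (p q : quat) : quat :=
  Quat (qre p * qre q - qi p * qi q - qj p * qj q - qk p * qk q)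
       (qre p * qi q + qi p * qre q + qj p * qk q - qk p * qj q)
       (qre p * qj q - qi p * qk q + qj p * qre q + qk p * qi q)
       (qre p * qk q + qi p * qj q - qj p * qi q + qk p * qre q).
Definition qconj (p : quat) : quat := Quat (qre p) (- qi p) (- qj p) (- qk p).

Definition qis_real (p : quat) : Prop := qi p = 0 /\ qj p = 0 /\ qk p = 0.

Definition qmulmx m n p (A : 'M[quat]_(m, n)) (B : 'M[quat]_(n, p))
  : 'M[quat]_(m, p) :=
  \matrix_(i, j) \big[qadd/q0]_(k < n) qmul (A i k) (B k j).

Definition qidmx n : 'M[quat]_n :=
  \matrix_(i, j) if i == j then q1 else q0.

Definition qadj m n (A : 'M[quat]_(m, n)) : 'M[quat]_(n, m) :=
  \matrix_(i, j) qconj (A j i).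

Definition qtrace n (A : 'M[quat]_n) : quat := \big[qadd/q0]_(i < n) A i i.

Definition qinvertible n (A : 'M[quat]_n) : Prop :=
  exists B : 'M[quat]_n, qmulmx A B = qidmx n /\ qmulmx B A = qidmx n.

Definition Inm1 n : 'M[quat]_n.+1 :=
  \matrix_(i, j) if i == j then (if i == ord_max then qreal (-1) else q1)
                 else q0.

Definition Sp_n1 n (A : 'M[quat]_n.+1) : Prop :=
  qinvertible A /\ qmulmx (qadj A) (qmulmx (Inm1 n) A) = Inm1 n.

(* 1 (+) B : block diagonal matrix with 1 in the upper left entry *)
Definition oplus1 (B : 'M[quat]_2) : 'M[quat]_3 :=
  \matrix_(i, j)
    match unlift ord0 i, unlift ord0 j with
    | Some i', Some j' => B i' j'
    | None, None => q1
    | _, _ => q0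
    end.

End Quat.

(* For a unit quaternion u, h = diag(u, 1) lies in Sp(1,1), and the trace of
   g (1 (+) h) g^-1 is K + sum_k a_k u b_k with K independent of u,
   a_k = g_k1, b_k = (g^-1)_1k, and sum_k b_k a_k = (g^-1 g)_11 = 1 (this is
   all that is used of g).  If the trace were real for every unit u, real
   linearity in u would force sum_k a_k x b_k = Re x for every quaternion x.
   But the real-part map is not a sum of three maps x |-> a x b: for c <> 0
   orthogonal to b_1, b_2, b_3 in R^4, averaging over the basis 1, i, j, k
   sends such a sum to 0 and the real-part map to conj c. *)
From mathcomp Require Import all_boot all_order all_algebra.
From mathcomp Require Import reals ring lra.
From Stdlib Require Import Classical.
Set Implicit Arguments. Unset Strict Implicit. Unset Printing Implicit Defensive.
Import Order.TTheory GRing.Theory Num.Theory.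
Local Open Scope ring_scope.

Section Quaternions.
Variable R : realType.
Local Notation quat := (quat R).
Local Notation q0 := (q0 R).
Local Notation q1 := (q1 R).
Local Notation qadd := (@qadd R).
Local Notation qmul := (@qmul R).
Local Notation qconj := (@qconj R).
Local Notation qreal := (@qreal R).

Lemma quatP (p q : quat) :
  qre p = qre q -> qi p = qi q -> qj p = qj q -> qk p = qk q -> p = q.
Proof. by case: p; case: q => /= ? ? ? ? ? ? ? ? -> -> -> ->. Qed.

Lemma qconjK : involutive qconj.
Proof. by case=> * /=; rewrite /qconj /= !opprK. Qed.

Definition qI : quat := Quat 0 1 0 0.
Definition qJ : quat := Quat 0 0 1 0.
Definition qK : quat := Quat 0 0 0 1.

Definition qbasis_sum (F : quat -> quat) : quat :=
  qadd (qadd (qadd (F q1) (F qI)) (F qJ)) (F qK).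

Lemma eq_qbasis_sum (F G : quat -> quat) : F =1 G -> qbasis_sum F = qbasis_sum G.
Proof. by move=> FG; rewrite /qbasis_sum !FG. Qed.

Lemma qbasis_sum_re c :
  qbasis_sum (fun e => qmul (qreal (qre (qmul e (qconj c)))) (qconj e)) = qconj c.
Proof. by apply: quatP => /=; ring. Qed.

Definition qscale (r : R) (p : quat) : quat :=
  Quat (r * qre p) (r * qi p) (r * qj p) (r * qk p).

Definition qnorm2 (p : quat) : R := qre p ^+ 2 + qi p ^+ 2 + qj p ^+ 2 + qk p ^+ 2.

Definition qdot (p q : quat) : R :=
  qre p * qre q + qi p * qi q + qj p * qj q + qk p * qk q.

Definition qcoord (p : quat) (m : 'I_4) : R := [:: qre p; qi p; qj p; qk p]`_m.

Definition quat_of_coord (f : 'I_4 -> R) : quat :=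
  Quat (f (inord 0)) (f (inord 1)) (f (inord 2)) (f (inord 3)).

Lemma quat_of_coordK f m : qcoord (quat_of_coord f) m = f m.
Proof.
by case: m => [[|[|[|[|//]]]] lt_m4] /=; congr f; apply: val_inj; rewrite /= inordK.
Qed.

Lemma qcoord0 m : qcoord q0 m = 0.
Proof. by case: m => [[|[|[|[|]]]] ?]. Qed.

Lemma qdotE p q : qdot p q = \sum_(m < 4) qcoord p m * qcoord q m.
Proof. by rewrite !big_ord_recl big_ord0 /= addr0 !addrA. Qed.

Lemma exists_qdot_orthogonal n (b : 'I_n -> quat) : (n < 4)%N ->
  exists c, c <> q0 /\ forall k, qdot c (b k) = 0.
Proof.
move=> lt_n4; pose B : 'M[R]_(4, n) := \matrix_(m, k) qcoord (b k) m.
have : kermx B != 0.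
  by rewrite kermx_eq0 /row_free neq_ltn (leq_ltn_trans (rank_leq_col B)).
case/rowV0Pn => v /sub_kermxP vB v_neq0; exists (quat_of_coord (v 0)); split.
  move=> c0; apply: (negP v_neq0); apply/eqP/rowP => m.
  by rewrite mxE -quat_of_coordK c0 qcoord0.
move=> k; have /rowP/(_ k) := vB; rewrite !mxE => vBk.
rewrite qdotE -[RHS]vBk.
by apply: eq_bigr => m _; rewrite quat_of_coordK mxE.
Qed.

Section BigSums.
Variables (I : Type) (r : seq I) (P : pred I) (F : I -> quat).

Lemma qre_sum : qre (\big[qadd/q0]_(i <- r | P i) F i) = \sum_(i <- r | P i) qre (F i).
Proof. by apply: big_morph. Qed.

Lemma qi_sum : qi (\big[qadd/q0]_(i <- r | P i) F i) = \sum_(i <- r | P i) qi (F i).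
Proof. by apply: big_morph. Qed.

Lemma qj_sum : qj (\big[qadd/q0]_(i <- r | P i) F i) = \sum_(i <- r | P i) qj (F i).
Proof. by apply: big_morph. Qed.

Lemma qk_sum : qk (\big[qadd/q0]_(i <- r | P i) F i) = \sum_(i <- r | P i) qk (F i).
Proof. by apply: big_morph. Qed.

End BigSums.

Definition qcomp_sum := (qre_sum, qi_sum, qj_sum, qk_sum).

Section Sandwich.
Variables (n : nat) (a b : 'I_n -> quat).

Definition qsandwich (x : quat) : quat := \big[qadd/q0]_(k < n) qmul (a k) (qmul x (b k)).

Lemma qsandwich_linear x : qsandwich x =
  qadd (qadd (qadd (qscale (qre x) (qsandwich q1)) (qscale (qi x) (qsandwich qI)))
             (qscale (qj x) (qsandwich qJ))) (qscale (qk x) (qsandwich qK)).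
Proof.
by apply: quatP; rewrite /= !qcomp_sum !mulr_sumr -!big_split;
  apply: eq_bigr => k _ /=; ring.
Qed.

Lemma qsandwich_real r : qsandwich (qreal r) = qscale r (qsandwich q1).
Proof.
by apply: quatP; rewrite /= !qcomp_sum mulr_sumr; apply: eq_bigr => k _ /=; ring.
Qed.

Lemma qre_qsandwich x :
  qre (qsandwich x) = qre (qmul x (\big[qadd/q0]_(k < n) qmul (b k) (a k))).
Proof.
rewrite /= !qcomp_sum !mulr_sumr -!sumrB.
by apply: eq_bigr => k _ /=; ring.
Qed.

(* The factor 4 comes from sum_e e q (conj e) = 4 Re q over e = 1, i, j, k. *)
Lemma qsandwich_basis_sum c :
  qbasis_sum (fun e => qmul (qsandwich (qmul e (qconj c))) (qconj e)) =
  \big[qadd/q0]_(k < n) qscale (4 * qdot c (b k)) (a k).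
Proof.
by apply: quatP; rewrite /= !qcomp_sum !mulr_suml -!(sumrB, big_split);
  apply: eq_bigr => k _ /=; rewrite /qdot; ring.
Qed.

End Sandwich.

Lemma qsandwich_neq_re n (a b : 'I_n -> quat) : (n < 4)%N ->
  ~ (forall x, qsandwich a b x = qreal (qre x)).
Proof.
move=> lt_n4 L_re; have [c [c_neq0 c_orth]] := exists_qdot_orthogonal b lt_n4.
have sum0 : \big[qadd/q0]_(k < n) qscale (4 * qdot c (b k)) (a k) = q0.
  by apply: quatP; rewrite !qcomp_sum big1 // => k _ /=; rewrite c_orth mulr0 mul0r.
have := qsandwich_basis_sum a b c.
rewrite (@eq_qbasis_sum _ (fun e => qmul (qreal (qre (qmul e (qconj c)))) (qconj e)));
  last by move=> e; rewrite L_re.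
rewrite qbasis_sum_re sum0 => conj_c0; apply: c_neq0; rewrite -[c]qconjK conj_c0.
by apply: quatP; rewrite /= ?oppr0.
Qed.

Lemma exists_unit_qsandwich_nonreal n (a b : 'I_n -> quat) (K : quat) :
  (n < 4)%N -> \big[qadd/q0]_(k < n) qmul (b k) (a k) = q1 ->
  exists u, qnorm2 u = 1 /\ ~ qis_real (qadd K (qsandwich a b u)).
Proof.
move=> lt_n4 ba1; apply: NNPP => all_real; pose L := qsandwich a b.
have real_on_sphere u : qnorm2 u = 1 ->
    [/\ qi K + qi (L u) = 0, qj K + qj (L u) = 0 & qk K + qk (L u) = 0].
  move=> u1; have [] : qis_real (qadd K (L u)).
    by apply: NNPP => not_real; apply: all_real; exists u.
  by move=> ? [].
have re_L u : qre (L u) = qre u by rewrite qre_qsandwich ba1 /=; ring.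
have [p1 p2 p3] := real_on_sphere q1 ltac:(rewrite /qnorm2 /=; ring).
have [m1 m2 m3] := real_on_sphere (qreal (-1)) ltac:(rewrite /qnorm2 /=; ring).
rewrite /L qsandwich_real -/L /= in m1 m2 m3.
have [i1 i2 i3] := real_on_sphere qI ltac:(rewrite /qnorm2 /=; ring).
have [j1 j2 j3] := real_on_sphere qJ ltac:(rewrite /qnorm2 /=; ring).
have [k1 k2 k3] := real_on_sphere qK ltac:(rewrite /qnorm2 /=; ring).
have L1 : L q1 = q1 by apply: quatP; rewrite ?re_L /=; lra.
have LI : L qI = q0 by apply: quatP; rewrite ?re_L /=; lra.
have LJ : L qJ = q0 by apply: quatP; rewrite ?re_L /=; lra.
have LK : L qK = q0 by apply: quatP; rewrite ?re_L /=; lra.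
apply: (qsandwich_neq_re (a := a) (b := b) lt_n4) => x.
by rewrite qsandwich_linear -/L L1 LI LJ LK; apply: quatP => /=; ring.
Qed.

End Quaternions.

Section Matrices.
Variable R : realType.
Local Notation quat := (quat R).
Local Notation q0 := (q0 R).
Local Notation q1 := (q1 R).

Lemma qmulmxE m n p (A : 'M[quat]_(m, n)) (B : 'M[quat]_(n, p)) i j :
  qmulmx A B i j = \big[@qadd R/q0]_(k < n) qmul (A i k) (B k j).
Proof. exact: mxE. Qed.

Definition qdiag_u1 (u : quat) : 'M[quat]_2 :=
  \matrix_(i, j) if i == j then (if i == ord0 then u else q1) else q0.

Lemma Sp_qdiag_u1 u : qnorm2 u = 1 -> Sp_n1 (n := 1) (qdiag_u1 u).
Proof.
rewrite /qnorm2 => u1.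
split; [exists (qdiag_u1 (qconj u)); split |]; apply/matrixP => i j;
  rewrite !(mxE, big_ord_recl, big_ord0) /=;
  by case: i => [[|[|//]] ?]; case: j => [[|[|//]] ?]; apply: quatP => /=; nra.
Qed.

Section Oplus1.
Variable B : 'M[quat]_2.

Lemma oplus1_00 : oplus1 B ord0 ord0 = q1.
Proof. by rewrite mxE unlift_none. Qed.

Lemma oplus1_0S j : oplus1 B ord0 (lift ord0 j) = q0.
Proof. by rewrite mxE unlift_none liftK. Qed.

Lemma oplus1_S0 i : oplus1 B (lift ord0 i) ord0 = q0.
Proof. by rewrite mxE unlift_none liftK. Qed.

Lemma oplus1_SS i j : oplus1 B (lift ord0 i) (lift ord0 j) = B i j.
Proof. by rewrite mxE !liftK. Qed.

End Oplus1.

Definition oplus1E := (oplus1_00, oplus1_0S, oplus1_S0, oplus1_SS).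

Lemma qtrace_conj_oplus1_qdiag_u1 (g ginv : 'M[quat]_3) u :
  qtrace (qmulmx g (qmulmx (oplus1 (qdiag_u1 u)) ginv)) =
  qadd (qtrace (qmulmx g (qmulmx (oplus1 (qdiag_u1 q0)) ginv)))
       (qsandwich (fun k => g k (lift ord0 ord0)) (fun k => ginv (lift ord0 ord0) k) u).
Proof.
rewrite /qtrace /qsandwich !(qmulmxE, big_ord_recl, big_ord0) !oplus1E !mxE /=.
by apply: quatP => /=; ring.
Qed.

End Matrices.

Theorem lemma4p6 (R : realType) (g ginv : 'M[quat R]_3) :
  Sp_n1 (n:=2) g ->
  qmulmx g ginv = qidmx R 3 -> qmulmx ginv g = qidmx R 3 ->
  exists h : 'M[quat R]_2,
    Sp_n1 (n:=1) h /\
    ~ qis_real (qtrace (qmulmx g (qmulmx (oplus1 h) ginv))).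
Proof.
move=> _ _ ginv_g; pose i1 : 'I_3 := lift ord0 ord0.
have ba1 : \big[@qadd R/q0 R]_(k < 3) qmul (ginv i1 k) (g k i1) = q1 R.
  by rewrite -qmulmxE ginv_g mxE eqxx.
have [u [u1 not_real]] := exists_unit_qsandwich_nonreal
  (qtrace (qmulmx g (qmulmx (oplus1 (qdiag_u1 (q0 R))) ginv))) (isT : (3 < 4)%N) ba1.
exists (qdiag_u1 u); split; first exact: Sp_qdiag_u1.
by rewrite qtrace_conj_oplus1_qdiag_u1.
Qed.
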